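(* Let $K$ be a field, $m\ge2$, $d_1,\ldots,d_m$ positive integers, $S=K[x_1,\ldots,x_m,y_1,\ldots,y_m]$, $f_{ij}=x_i^{d_i}y_j^{d_j}-x_j^{d_j}y_i^{d_i}$ for $1\le i<j\le m$, $I_2(D)=(f_{ij}:1\le i<j\le m)$ (the ideal of $2$-minors of $\begin{pmatrix}x_1^{d_1}&\cdots&x_m^{d_m}\\ y_1^{d_1}&\cdots&y_m^{d_m}\end{pmatrix}$), and $J_L=(f_{12},f_{13},\ldots,f_{1m})$. Then $J_L=I_2(D)\cap(x_1^{d_1},y_1^{d_1})$. *)

From HB Require Import structures.
From mathcomp Require Import all_boot all_order all_algebra.
From mathcomp Require Import mpoly.
Set Implicit Arguments. Unset Strict Implicit. Unset Printing Implicit Defensive.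
Import GRing.Theory.
Local Open Scope ring_scope.

(* S = K[x_1..x_m, y_1..y_m] is {mpoly K[m + m]}; x_i = 'X_(lshift m i),
   y_i = 'X_(rshift m i), indices 0-based. *)
Definition xv (K : fieldType) (m : nat) (i : 'I_m) : {mpoly K[m + m]} :=
  'X_(lshift m i).
Definition yv (K : fieldType) (m : nat) (i : 'I_m) : {mpoly K[m + m]} :=
  'X_(rshift m i).

Definition fmin (K : fieldType) (m : nat) (d : 'I_m -> nat) (i j : 'I_m)
  : {mpoly K[m + m]} :=
  xv K i ^+ d i * yv K j ^+ d j - xv K j ^+ d j * yv K i ^+ d i.

Definition in_ideal_gen (R : comRingType) (I : finType) (P : pred I)
  (g : I -> R) (p : R) : Prop :=
  exists c : I -> R, p = \sum_(k | P k) c k * g k.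

Definition I2D (K : fieldType) (m : nat) (d : 'I_m -> nat) (p : {mpoly K[m + m]}) :=
  in_ideal_gen (fun ij : 'I_m * 'I_m => (ij.1 < ij.2)%N)
    (fun ij => fmin K d ij.1 ij.2) p.

Definition JL (K : fieldType) (m : nat) (d : 'I_m -> nat) (p : {mpoly K[m + m]}) :=
  in_ideal_gen (fun ij : 'I_m * 'I_m => (val ij.1 == 0%N) && (ij.1 < ij.2)%N)
    (fun ij => fmin K d ij.1 ij.2) p.

Definition M1 (K : fieldType) (m : nat) (d : 'I_m -> nat) (p : {mpoly K[m + m]}) :=
  in_ideal_gen (fun bi : bool * 'I_m => val bi.2 == 0%N)
    (fun bi => if bi.1 then xv K bi.2 ^+ d bi.2 else yv K bi.2 ^+ d bi.2) p.

From HB Require Import structures.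
From mathcomp Require Import all_boot all_order all_algebra.
From mathcomp Require Import mpoly ring.
Set Implicit Arguments. Unset Strict Implicit. Unset Printing Implicit Defensive.
Import GRing.Theory.
Local Open Scope ring_scope.

(* Let pi be the K-linear projection of S keeping only the monomials whose
   x_1- and y_1-exponents are both below d_1.  It kills (x_1^d_1, y_1^d_1),
   commutes with multiplication by polynomials not involving x_1, y_1, and
   q - pi q lies in (x_1^d_1, y_1^d_1) for every q.  If p = sum c_ij f_ij is
   also in (x_1^d_1, y_1^d_1), then p = p - pi p; the terms with i = 1 are in
   J_L, and for 1 < i < j the term c f_ij - pi (c f_ij) = (c - pi c) f_ij lies
   in (x_1^d_1, y_1^d_1) f_ij, which is in J_L because
   x_1^d_1 f_ij = x_i^d_i f_1j - x_j^d_j f_1i and similarly for y_1^d_1. *)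

Section MonomialProjection.
Variables (R : nzRingType) (n : nat) (S : pred 'X_{1..n}).

Definition mproj (p : {mpoly R[n]}) : {mpoly R[n]} :=
  \sum_(mu <- msupp p | S mu) p@_mu *: 'X_[mu].

Lemma mcoeff_mproj p nu : (mproj p)@_nu = if S nu then p@_nu else 0.
Proof.
rewrite /mproj raddf_sum /= big_mkcond /=.
under eq_bigr => mu _ do rewrite mcoeffZ mcoeffX.
case: (boolP (nu \in msupp p)) => [p_nu | /memN_msupp_eq0 p_nu].
  rewrite (bigD1_seq nu) ?msupp_uniq //= eqxx mulr1 big1 ?addr0 // => mu /negbTE->.
  by rewrite mulr0 if_same.
rewrite p_nu if_same big1_seq // => mu mu_p.
have [mu_nu | _] := eqVneq mu nu; last by rewrite mulr0 if_same.
by rewrite mu_nu p_nu mul0r if_same.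
Qed.

Lemma mproj_is_linear : linear mproj.
Proof.
move=> c p q; apply/mpolyP => nu.
by rewrite mcoeffD mcoeffZ !mcoeff_mproj mcoeffD mcoeffZ; case: (S nu); rewrite ?mulr0 ?addr0.
Qed.

HB.instance Definition _ :=
  GRing.isLinear.Build R {mpoly R[n]} {mpoly R[n]} _ mproj mproj_is_linear.

Lemma mprojX mu : mproj 'X_[mu] = if S mu then 'X_[mu] else 0.
Proof. by rewrite /mproj msuppX big_mkcond big_seq1 mcoeffX eqxx scale1r. Qed.

Lemma mproj_mulX c (nu : 'X_{1..n}) : (forall mu, S (mu + nu)%MM = S mu) ->
  mproj (c * 'X_[nu]) = mproj c * 'X_[nu].
Proof.
move=> S_nu; rewrite [in LHS](mpolyE c) [in RHS](mpolyE c) mulr_suml !linear_sum mulr_suml /=.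
apply: eq_bigr => mu _; rewrite -scalerAl -mpolyXD !linearZ /= !mprojX S_nu.
by case: (S mu); rewrite ?mpolyXD ?scalerAl ?scaler0 ?mul0r.
Qed.

Lemma mproj_mulX_eq0 c (nu : 'X_{1..n}) :
  (forall mu, ~~ S (mu + nu)%MM) -> mproj (c * 'X_[nu]) = 0.
Proof.
move=> S_nu; rewrite (mpolyE c) mulr_suml linear_sum big1 // => mu _.
by rewrite -scalerAl -mpolyXD linearZ /= mprojX (negbTE (S_nu mu)) scaler0.
Qed.

Lemma subr_mproj p : p - mproj p = \sum_(mu <- msupp p | ~~ S mu) p@_mu *: 'X_[mu].
Proof. by rewrite {1}(mpolyE p) (bigID S) /= addrAC subrr add0r. Qed.

Definition mproj_comm (f : {mpoly R[n]}) := forall c, mproj (c * f) = mproj c * f.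

Lemma mproj_comm1 : mproj_comm 1.
Proof. by move=> c; rewrite !mulr1. Qed.

Lemma mproj_commM f g : mproj_comm f -> mproj_comm g -> mproj_comm (f * g).
Proof. by move=> Sf Sg c; rewrite mulrA Sg Sf mulrA. Qed.

Lemma mproj_commB f g : mproj_comm f -> mproj_comm g -> mproj_comm (f - g).
Proof. by move=> Sf Sg c; rewrite !mulrBr raddfB /= Sf Sg. Qed.

Lemma mproj_commXn f k : mproj_comm f -> mproj_comm (f ^+ k).
Proof.
move=> Sf; elim: k => [|k IHk]; first by rewrite expr0; apply: mproj_comm1.
by rewrite exprS; apply: mproj_commM.
Qed.

End MonomialProjection.

Section BoxProjection.
Variables (R : nzRingType) (n : nat) (a b : 'I_n) (e : nat).

Definition mbox (mu : 'X_{1..n}) := ((mu a < e) && (mu b < e))%N.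

Local Notation pbox := (@mproj R n mbox).

Lemma mproj_box_commX k : k != a -> k != b -> mproj_comm mbox ('X_k : {mpoly R[n]}).
Proof.
move=> ka kb c; apply: mproj_mulX => mu.
by rewrite /mbox !mnmDE !mnm1E (negbTE ka) (negbTE kb) !addn0.
Qed.

Lemma mproj_box_mulXn_eq0 c k : (k == a) || (k == b) -> pbox (c * 'X_k ^+ e) = 0.
Proof.
move=> k_ab; rewrite mpolyXn; apply: mproj_mulX_eq0 => mu.
rewrite /mbox negb_and -!leqNgt !mnmDE !mulmnE !mnm1E.
by case/orP: k_ab => /eqP->; rewrite eqxx mul1n leq_addl ?orbT.
Qed.

Lemma mpolyX_divXn (mu : 'X_{1..n}) k : (e <= mu k)%N ->
  'X_[mu] = 'X_[mu - U_(k) *+ e] * ('X_k : {mpoly R[n]}) ^+ e.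
Proof.
move=> e_mu; rewrite mpolyXn -mpolyXD submK //; apply/mnm_lepP => i.
by rewrite mulmnE mnm1E; case: eqP => [<-|_]; rewrite ?mul1n ?mul0n.
Qed.

Lemma subr_mproj_box c : exists u v, c - pbox c = u * 'X_a ^+ e + v * 'X_b ^+ e.
Proof.
pose inXab (p : {mpoly R[n]}) := exists u v, p = u * 'X_a ^+ e + v * 'X_b ^+ e.
rewrite subr_mproj; apply: (big_ind inXab) => [|p q [u [v ->]] [u' [v' ->]]|mu].
- by exists 0, 0; rewrite !mul0r addr0.
- by exists (u + u'), (v + v'); rewrite !mulrDl addrACA.
rewrite /mbox negb_and -!leqNgt => /orP[] /mpolyX_divXn->.
  by exists (c@_mu *: 'X_[mu - U_(a) *+ e]), 0; rewrite mul0r addr0 scalerAl.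
by exists 0, (c@_mu *: 'X_[mu - U_(b) *+ e]); rewrite mul0r add0r scalerAl.
Qed.

End BoxProjection.

Section IdealGen.
Variables (R : comNzRingType) (I : finType) (P : pred I) (g : I -> R).
Local Notation ideal := (in_ideal_gen P g).

Lemma in_ideal_gen0 : ideal 0.
Proof. by exists (fun _ => 0); rewrite big1 // => k _; rewrite mul0r. Qed.

Lemma in_ideal_genD p q : ideal p -> ideal q -> ideal (p + q).
Proof.
move=> [c ->] [c' ->]; exists (fun k => c k + c' k).
by rewrite -big_split; apply: eq_bigr => k _; rewrite mulrDl.
Qed.

Lemma in_ideal_genMl r p : ideal p -> ideal (r * p).
Proof.
move=> [c ->]; exists (fun k => r * c k).
by rewrite mulr_sumr; apply: eq_bigr => k _; rewrite mulrA.
Qed.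

Lemma in_ideal_genB p q : ideal p -> ideal q -> ideal (p - q).
Proof. by move=> Ip Iq; apply: in_ideal_genD => //; rewrite -mulN1r; apply: in_ideal_genMl. Qed.

Lemma in_ideal_gen_mem k : P k -> ideal (g k).
Proof.
move=> Pk; exists (fun j => (j == k)%:R); rewrite (bigD1 k) //= eqxx mul1r big1 ?addr0 //.
by move=> j /andP[_ /negbTE->]; rewrite mul0r.
Qed.

Lemma in_ideal_gen_sum (J : Type) (r : seq J) (Q : pred J) (F : J -> R) :
  (forall j, Q j -> ideal (F j)) -> ideal (\sum_(j <- r | Q j) F j).
Proof. by move=> IF; apply: big_ind => //; [apply: in_ideal_gen0 | apply: in_ideal_genD]. Qed.

Lemma in_ideal_gen_sub (I' : finType) (P' : pred I') (g' : I' -> R) p :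
  (forall k, P' k -> ideal (g' k)) -> in_ideal_gen P' g' p -> ideal p.
Proof. by move=> Ig' [c ->]; apply: in_ideal_gen_sum => k P'k; apply/in_ideal_genMl/Ig'. Qed.

End IdealGen.

Arguments in_ideal_gen_mem {R I P g} k _.

Section Minors.
Variables (K : fieldType) (m : nat) (d : 'I_m -> nat) (i0 : 'I_m).
Hypothesis i0_eq0 : val i0 = 0%N.

Local Notation box := (mbox (lshift m i0) (rshift m i0) (d i0)).
Local Notation pbox := (mproj box).

Lemma eq_i0 i : (val i == 0%N) = (i == i0).
Proof. by rewrite -val_eqE i0_eq0. Qed.

Lemma fmin_in_JL j : (0 < val j)%N -> JL d (fmin K d i0 j).
Proof.
by move=> j_gt0; apply: (in_ideal_gen_mem (i0, j)); rewrite /= i0_eq0 eqxx.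
Qed.

Lemma fmin_in_M1 j : M1 d (fmin K d i0 j).
Proof.
have M1x : M1 d (xv K i0 ^+ d i0) by apply: (in_ideal_gen_mem (true, i0)); rewrite /= i0_eq0.
have M1y : M1 d (yv K i0 ^+ d i0) by apply: (in_ideal_gen_mem (false, i0)); rewrite /= i0_eq0.
by apply: in_ideal_genB; [rewrite mulrC|]; apply: in_ideal_genMl.
Qed.

Lemma JL_I2D (p : {mpoly K[m + m]}) : JL d p -> I2D d p.
Proof.
by apply: in_ideal_gen_sub => k /andP[_ lt_k]; apply: (in_ideal_gen_mem k).
Qed.

Lemma JL_M1 (p : {mpoly K[m + m]}) : JL d p -> M1 d p.
Proof. by apply: in_ideal_gen_sub => k /andP[]; rewrite eq_i0 => /eqP-> _; apply: fmin_in_M1. Qed.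

Lemma mproj_M1 (p : {mpoly K[m + m]}) : M1 d p -> pbox p = 0.
Proof.
move=> [c ->]; rewrite linear_sum big1 // => -[[] i] /=; rewrite eq_i0 => /eqP->;
  by apply: mproj_box_mulXn_eq0; rewrite eqxx ?orbT.
Qed.

Lemma mproj_comm_fmin i j : (0 < val i)%N -> (0 < val j)%N ->
  mproj_comm box (fmin K d i j).
Proof.
have neq_i0 k : (0 < val k)%N -> k != i0 by rewrite lt0n eq_i0.
move=> /neq_i0 i_i0 /neq_i0 j_i0.
rewrite /fmin /xv /yv; apply: mproj_commB; apply: mproj_commM; apply: mproj_commXn;
  by apply: mproj_box_commX; rewrite ?eq_lshift ?eq_rshift ?eq_lrshift ?eq_rlshift.
Qed.

Lemma Xpow_fmin_in_JL i j : (0 < val i)%N -> (0 < val j)%N ->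
  JL d (xv K i0 ^+ d i0 * fmin K d i j) /\ JL d (yv K i0 ^+ d i0 * fmin K d i j).
Proof.
move=> i_gt0 j_gt0.
have JL_comb u v : JL d (u * fmin K d i0 j - v * fmin K d i0 i).
  by apply: in_ideal_genB; apply: in_ideal_genMl; apply: fmin_in_JL.
split.
  have -> : xv K i0 ^+ d i0 * fmin K d i j
      = xv K i ^+ d i * fmin K d i0 j - xv K j ^+ d j * fmin K d i0 i by rewrite /fmin; ring.
  exact: JL_comb.
have -> : yv K i0 ^+ d i0 * fmin K d i j
    = yv K i ^+ d i * fmin K d i0 j - yv K j ^+ d j * fmin K d i0 i by rewrite /fmin; ring.
exact: JL_comb.
Qed.

Lemma I2D_M1_JL (p : {mpoly K[m + m]}) : I2D d p -> M1 d p -> JL d p.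
Proof.
move=> [c def_p] /mproj_M1 pbox_p0.
have -> : p = p - pbox p by rewrite pbox_p0 subr0.
rewrite def_p [pbox _]linear_sum -sumrB.
apply: in_ideal_gen_sum => -[i j] /= lt_ij.
have [i_0 | i_gt0] := posnP (val i).
  move: lt_ij; have -> : i = i0 by apply: val_inj; rewrite i_0 i0_eq0.
  rewrite i0_eq0 => j_gt0.
  have JL_cf : JL d (c (i0, j) * fmin K d i0 j) by apply/in_ideal_genMl/fmin_in_JL.
  by rewrite mproj_M1 ?subr0 //; apply: JL_M1.
have j_gt0 : (0 < val j)%N by apply: ltn_trans lt_ij.
have [JLx JLy] := Xpow_fmin_in_JL i_gt0 j_gt0.
rewrite mproj_comm_fmin // -mulrBl.
have [u [v ->]] := subr_mproj_box (lshift m i0) (rshift m i0) (d i0) (c (i, j)).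
by rewrite mulrDl -!mulrA; apply: in_ideal_genD; apply: in_ideal_genMl.
Qed.

End Minors.

Theorem proposition4p13 (K : fieldType) (m : nat) (hm : (2 <= m)%N)
  (d : 'I_m -> nat) (hd : forall i, (0 < d i)%N) (p : {mpoly K[m + m]}) :
  JL d p <-> (I2D d p /\ M1 d p).
Proof.
have m_gt0 : (0 < m)%N by apply: ltnW.
pose i0 := Ordinal m_gt0.
split=> [JLp | [I2Dp M1p]]; last exact: (I2D_M1_JL (i0 := i0)).
by split; [apply: JL_I2D | apply: (JL_M1 (i0 := i0))].
Qed.
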